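(* Let $n\ge 1$. For every $G\in\mathcal{G}_{2n}$ with $F(G)=n-1$ we have $\lfloor n/2\rfloor\le f(G)\le n-1$, and for every integer $m$ with $\lfloor n/2\rfloor\leq m\leq n-1$ there exists $G\in\mathcal{G}_{2n}$ with $F(G)=n-1$ and $f(G)=m$. That is, $\{f(G): G\in\mathcal{G}_{2n},\ F(G)=n-1\}=\{\lfloor n/2\rfloor,\dots,n-1\}$.
   Context: All graphs are finite and simple. $\mathcal{G}_{2n}$ denotes the set of all graphs with $2n$ vertices that have a perfect matching. For a perfect matching $M$ of $G$, a forcing set of $M$ is a subset $S\subseteq M$ contained in no other perfect matching of $G$; $f(G,M)$ is the minimum size of a forcing set of $M$. $f(G)$ and $F(G)$ are the minimum and maximum of $f(G,M)$ over all perfect matchings $M$ of $G$. *)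

From mathcomp Require Import all_boot.
Set Implicit Arguments. Unset Strict Implicit. Unset Printing Implicit Defensive.

Definition simple_graph (V : finType) (e : rel V) : Prop :=
  (forall x, ~~ e x x) /\ (forall x y, e x y = e y x).

Definition is_pm (V : finType) (e : rel V) (M : {set {set V}}) : bool :=
  [forall A in M, exists u, exists v, [&& u != v, e u v & A == [set u; v]]] &&
  [forall x, #|[set A in M | x \in A]| == 1].

Definition has_pm (V : finType) (e : rel V) : bool := [exists M, is_pm e M].

Definition forcing (V : finType) (e : rel V) (M S : {set {set V}}) : bool :=
  (S \subset M) && [forall M', (is_pm e M' && (S \subset M')) ==> (M' == M)].

(* f(G,M): minimum size of a forcing set of M (M itself is forcing, so the default #|M| is harmless). *)
Definition fGM (V : finType) (e : rel V) (M : {set {set V}}) : nat :=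
  \big[minn/#|M|]_(S | forcing e M S) #|S|.

(* f(G) and F(G): min and max of f(G,M) over perfect matchings M
   (defaults irrelevant when G has a perfect matching). *)
Definition fmin (V : finType) (e : rel V) : nat :=
  \big[minn/#|V|]_(M | is_pm e M) fGM e M.
Definition Fmax (V : finType) (e : rel V) : nat :=
  \max_(M | is_pm e M) fGM e M.

(* The general tool is an
   alternating-cycle criterion ([orientation_not_forcing]): a set [S] of matching edges does
   not force [N] as soon as some nonempty set of vertices not covered by [S], containing no
   two mates, lets each of its vertices step along a non-matching edge to the mate of a
   vertex of the set; a minimal invariant subset of this step map closes an alternating
   cycle, and exchanging along it gives a second perfect matching containing [S].

   A perfect matching [M] with forcing number at least [n - 1] is pairwise
   alternating: two non-alternating edges could be dropped and the rest would still force
   [M] ([non_alternating_forcing]).  If [M] is pairwise alternating and [S] is a forcing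
   set of any perfect matching with [#|S| < n./2], two edges of [M] avoid the vertices of
   [S] and form a dominating square, which carries an alternating cycle avoiding [S] by a
   case analysis on the mates of its corners ([square_not_forcing]).  The upper bound holds
   because all edges but one force a perfect matching.

   For [n./2 <= m <= n - 1], [hub_graph n m] has [2 m + 1] universal hubs
   and pairs the other vertices as buddies [{2 j, 2 j + 1}].  The buddy matching is forced
   by its [m] edges below [2 m], every forcing set must cover all hubs but one, hence has
   [m] edges, and matching [i] with [i + n] is pairwise alternating, so [F = n - 1]. *)

From mathcomp Require Import all_boot zify.
From Stdlib Require Import Classical.
Set Implicit Arguments. Unset Strict Implicit. Unset Printing Implicit Defensive.

(* Every map sending a nonempty finite set into itself has a nonempty invariant subset
   on which it is onto (hence a bijection): take an invariant subset of least size. *)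
Lemma invariant_core (T : finType) (f : T -> T) (X : {set T}) :
  X != set0 -> f @: X \subset X -> exists2 Y : {set T}, (Y != set0) && (Y \subset X) & f @: Y = Y.
Proof.
move=> X0 fX; pose P (Y : {set T}) := [&& Y != set0, Y \subset X & f @: Y \subset Y].
have PX : P X by rewrite /P X0 subxx fX.
case: (@arg_minnP _ X P (fun Y : {set T} => #|Y|) PX) => Y /and3P [Y0 YX fY] minY.
exists Y; first by rewrite Y0 YX.
apply/eqP; rewrite eqEcard fY /=; apply: minY.
by rewrite /P imset_eq0 Y0 (subset_trans fY YX) imsetS.
Qed.

Lemma cover_pairs (T : finType) (h : T -> T) (Y : {set T}) :
  cover [set [set y; h y] | y in Y] = Y :|: h @: Y.
Proof.
apply/setP => x; apply/bigcupP/setUP => [[B /imsetP [y yY ->]]|].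
  by rewrite !inE => /orP [] /eqP ->; [left | right; apply: imset_f].
case=> [xY | /imsetP [y yY ->]].
  by exists [set x; h x]; [apply: imset_f | apply: setU11].
by exists [set y; h y]; [apply: imset_f | rewrite !inE eqxx orbT].
Qed.

Lemma disjoint_set2 (T : finType) (a b c d : T) :
  a != c -> a != d -> b != c -> b != d -> [disjoint [set a; b] & [set c; d]].
Proof.
move=> ac ad bc bd; rewrite -setI_eq0; apply/eqP/setP => x; rewrite !inE.
by apply/negbTE; apply/andP => -[/orP [] /eqP -> /orP [] /eqP E];
  move: ac ad bc bd; rewrite E eqxx.
Qed.

Ltac distinct := rewrite /= !inE !negb_or; repeat (apply/andP; split); rewrite // eq_sym //.

Lemma uniq4P (T : eqType) (a b c d : T) :
  uniq [:: a; b; c; d] -> [/\ a != b, a != c, a != d, b != c & [/\ b != d & c != d]].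
Proof. by rewrite /= !inE !negb_or -!andbA => /and3P [-> -> /and3P [-> -> /and3P [-> -> _]]]. Qed.

Lemma bigmin_le (I : finType) (P : pred I) (F : I -> nat) x0 j :
  P j -> \big[minn/x0]_(i | P i) F i <= F j.
Proof.
move=> Pj; rewrite unlock; have : j \in index_enum I by rewrite mem_index_enum.
elim: (index_enum I) => // i r IH; rewrite inE /= => /orP [/eqP <-|jr].
  by rewrite Pj geq_minl.
by case: ifP => _; rewrite ?geq_min IH ?orbT.
Qed.

Lemma bigmin_ge (I : finType) (P : pred I) (F : I -> nat) x0 k :
  k <= x0 -> (forall i, P i -> k <= F i) -> k <= \big[minn/x0]_(i | P i) F i.
Proof. by move=> k0 kF; elim/big_ind: _ => // x y kx ky; rewrite leq_min kx ky. Qed.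

(* Counting step of the lower bound: [s < k./2] edges meet at most [k - 2] of [k] edges. *)
Lemma half_room k h s : s < k./2 -> h <= 2 * s -> 1 < k - h.
Proof. rewrite -divn2; lia. Qed.

Section PerfectMatchings.
Variables (V : finType) (e : rel V).
Hypothesis e_sym : forall x y, e x y = e y x.

Definition edge_of (A : {set V}) : Prop :=
  exists u v, [/\ u != v, e u v & A = [set u; v]].

Lemma pmP (M : {set {set V}}) :
  is_pm e M <->
  [/\ {in M, forall A, edge_of A},
      (forall x, exists2 A, A \in M & x \in A) &
      (forall x A B, A \in M -> B \in M -> x \in A -> x \in B -> A = B)].
Proof.
split.
- move=> /andP [/forallP edgeM /forallP oneM]; split.
  + move=> A HA; move: (edgeM A); rewrite HA /=.
    by move=> /existsP [u /existsP [v /and3P [uv euv /eqP ->]]]; exists u, v.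
  + move=> x; have /cards1P [A hA] := oneM x.
    have : A \in [set B in M | x \in B] by rewrite hA set11.
    by rewrite inE => /andP [HA xA]; exists A.
  + move=> x A B HA HB xA xB; have /cards1P [C hC] := oneM x.
    have : A \in [set A0 in M | x \in A0] by rewrite inE HA xA.
    have : B \in [set A0 in M | x \in A0] by rewrite inE HB xB.
    by rewrite hC !inE => /eqP -> /eqP ->.
- move=> [edgeM coverM uniqM]; apply/andP; split; apply/forallP.
  + move=> A; apply/implyP => HA; have [u [v [uv euv ->]]] := edgeM A HA.
    by apply/existsP; exists u; apply/existsP; exists v; rewrite uv euv eqxx.
  + move=> x; apply/cards1P; have [A HA xA] := coverM x; exists A.
    apply/setP => B; rewrite !inE; apply/andP/eqP => [[HB xB]|->] //.
    exact: uniqM xB xA.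
Qed.

Definition mate (M : {set {set V}}) (x : V) : V :=
  odflt x [pick y | [set x; y] \in M].

Section Mate.
Variable M : {set {set V}}.
Hypothesis pmM : is_pm e M.

Lemma pm_edge A : A \in M -> edge_of A.
Proof. by have [edgeM _ _] := (pmP M).1 pmM; apply: edgeM. Qed.

Lemma pm_cover x : exists2 A, A \in M & x \in A.
Proof. by have [_ coverM _] := (pmP M).1 pmM; apply: coverM. Qed.

Lemma pm_uniq x A B : A \in M -> B \in M -> x \in A -> x \in B -> A = B.
Proof. by have [_ _ uniqM] := (pmP M).1 pmM; apply: uniqM. Qed.

Lemma mate_edge x : [set x; mate M x] \in M.
Proof.
have [A HA xA] := pm_cover x; have [u [v [_ _ EA]]] := pm_edge HA.
rewrite /mate; case: pickP => [y //|none].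
move: xA; rewrite EA !inE => /orP [] /eqP xE; subst x.
- by move: (none v); rewrite -EA HA.
- by move: (none u); rewrite setUC -EA HA.
Qed.

Lemma pm_edgeE A x : A \in M -> x \in A -> A = [set x; mate M x].
Proof. by move=> HA xA; apply: pm_uniq HA (mate_edge x) xA (setU11 _ _). Qed.

Lemma pm_edge_neq x y : [set x; y] \in M -> y != x.
Proof.
move=> /pm_edge [u [v [uv _ E]]]; apply/eqP => yx.
by move: (congr1 (fun A : {set V} => #|A|) E); rewrite yx setUid cards1 cards2 uv.
Qed.

Lemma pm_edge_pair A x y : A \in M -> x \in A -> y \in A -> x != y -> A = [set x; y].
Proof.
move=> AM xA yA xy; rewrite (pm_edgeE AM xA); congr [set x; _].
by move: yA; rewrite (pm_edgeE AM xA) !inE eq_sym (negbTE xy) => /eqP.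
Qed.

Lemma pm_edges_neq A B x y :
  A \in M -> B \in M -> A != B -> x \in A -> y \in B -> x != y.
Proof.
move=> AM BM AB xA yB; apply: contraNneq AB => xy; apply/eqP.
by apply: (pm_uniq AM BM xA); rewrite xy.
Qed.

Lemma mate_neq x : mate M x != x.
Proof. exact: pm_edge_neq (mate_edge x). Qed.

Lemma mateK : involutive (mate M).
Proof.
move=> x; have E := pm_edgeE (mate_edge x) (setU1r _ (set11 _)).
have : x \in [set mate M x; mate M (mate M x)] by rewrite -E setU11.
by rewrite !inE eq_sym (negbTE (mate_neq x)) => /eqP.
Qed.

Lemma mate_eqE x y : (mate M x == y) = (x == mate M y).
Proof. by apply/eqP/eqP => [<-|->]; rewrite mateK. Qed.

Lemma in_pmE x y : ([set x; y] \in M) = (y == mate M x).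
Proof.
apply/idP/eqP => [H|->]; last exact: mate_edge.
have : y \in [set x; mate M x] by rewrite -(pm_edgeE H (setU11 _ _)) !inE eqxx orbT.
by rewrite !inE (negbTE (pm_edge_neq H)) => /eqP.
Qed.

Lemma mate_adj x : e x (mate M x).
Proof.
have [u [v [_ euv E]]] := pm_edge (mate_edge x).
have xuv : x \in [set u; v] by rewrite -E setU11.
have : mate M x \in [set u; v] by rewrite -E !inE eqxx orbT.
move: xuv (mate_neq x); rewrite !inE.
by case/orP => /eqP -> /[swap] /orP [] /eqP ->; rewrite ?eqxx // e_sym.
Qed.

Lemma pm_matesE : M = [set [set x; mate M x] | x : V].
Proof.
apply/setP => A; apply/idP/imsetP => [HA|[x _ ->]]; last exact: mate_edge.
have [u [v [_ _ EA]]] := pm_edge HA.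
by exists u => //; apply: pm_edgeE; rewrite // EA setU11.
Qed.

Lemma card_cover_pm (R : {set {set V}}) : R \subset M -> #|cover R| = 2 * #|R|.
Proof.
move=> RM; rewrite mulnC; apply: card_uniform_partition.
  by move=> A /(subsetP RM) /pm_edge [u [v [uv _ ->]]]; rewrite cards2 uv.
apply/and3P; split => //.
- apply/trivIsetP => A B /(subsetP RM) HA /(subsetP RM) HB; apply: contraR.
  by case/pred0Pn => x /andP [xA xB]; rewrite (pm_uniq HA HB xA xB).
- by apply/negP => /(subsetP RM) /pm_edge [u [v [_ _ /setP /(_ u)]]]; rewrite !inE eqxx.
Qed.

Lemma pm_card : #|V| = 2 * #|M|.
Proof.
rewrite -(card_cover_pm (subxx M)); suff -> : cover M = [set: V] by rewrite cardsT.
apply/setP => x; rewrite inE.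
by have [A HA xA] := pm_cover x; apply/bigcupP; exists A.
Qed.

End Mate.

Definition pairing (s : V -> V) : {set {set V}} := [set [set x; s x] | x : V].

Section Pairing.
Variable s : V -> V.
Hypotheses (sK : involutive s) (s_neq : forall x, s x != x) (s_adj : forall x, e x (s x)).

Lemma pairing_pm : is_pm e (pairing s).
Proof.
have key x y : x \in [set y; s y] -> [set y; s y] = [set x; s x].
  by rewrite !inE => /orP [] /eqP ->; rewrite ?sK // setUC.
apply/pmP; split.
- by move=> A /imsetP [x _ ->]; exists x, (s x); rewrite eq_sym s_neq s_adj.
- by move=> x; exists [set x; s x]; [exact: imset_f | exact: setU11].
- by move=> x A B /imsetP [y _ ->] /imsetP [z _ ->] /key -> /key ->.
Qed.

Lemma mate_pairing : mate (pairing s) =1 s.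
Proof. by move=> x; apply/esym/eqP; rewrite -(in_pmE pairing_pm); apply/imsetP; exists x. Qed.

End Pairing.

Lemma pm_eq_mate (M M' : {set {set V}}) :
  is_pm e M -> is_pm e M' -> mate M =1 mate M' -> M = M'.
Proof.
move=> pmM pmM' EM; rewrite (pm_matesE pmM) (pm_matesE pmM').
by apply: eq_imset => x; rewrite EM.
Qed.

Lemma pm_subset_eq (M M' : {set {set V}}) : is_pm e M -> is_pm e M' -> M \subset M' -> M = M'.
Proof.
move=> pmM pmM' MM'; apply: pm_eq_mate => // x; apply/eqP.
by rewrite -(in_pmE pmM') (subsetP MM') ?mate_edge.
Qed.

Lemma not_forcing (N N' S : {set {set V}}) :
  is_pm e N' -> S \subset N' -> N' != N -> ~~ forcing e N S.
Proof.
move=> pmN' SN' N'N; rewrite negb_and; apply/orP; right.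
by apply/forallPn; exists N'; rewrite negb_imply pmN' SN' N'N.
Qed.

Lemma forcing_sub (N S : {set {set V}}) : forcing e N S -> S \subset N.
Proof. by case/andP. Qed.

Section SubMatching.
Variables (N R : {set {set V}}).
Hypotheses (pmN : is_pm e N) (RN : R \subset N).

Lemma in_coverE x : (x \in cover R) = ([set x; mate N x] \in R).
Proof.
apply/bigcupP/idP => [[B BR xB]|xR]; last by exists [set x; mate N x]; rewrite ?setU11.
by rewrite -(pm_edgeE pmN (subsetP RN _ BR) xB).
Qed.

Lemma mate_cover x : (mate N x \in cover R) = (x \in cover R).
Proof. by rewrite !in_coverE (mateK pmN) setUC. Qed.

Section Agree.
Variable M' : {set {set V}}.
Hypotheses (pmM' : is_pm e M') (agree : N :\: R \subset M').

Lemma mate_outside x : x \notin cover R -> mate M' x = mate N x.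
Proof.
rewrite in_coverE => xR; apply/esym/eqP; rewrite -(in_pmE pmM').
by apply: (subsetP agree); rewrite inE xR mate_edge.
Qed.

Lemma mate_inside x : x \in cover R -> mate M' x \in cover R.
Proof.
move=> xR; apply: contraT => yR; have := mate_outside yR.
rewrite (mateK pmM') => /(congr1 (mate N)); rewrite (mateK pmN) => E.
by move: yR; rewrite -E mate_cover xR.
Qed.

End Agree.

Lemma pm_exchange (A : {set {set V}}) :
  {in A, forall B, edge_of B} -> trivIset A -> cover A = cover R ->
  is_pm e ((N :\: R) :|: A).
Proof.
move=> edgeA trivA coverAR; apply/pmP; split.
- by move=> B; rewrite !inE => /orP [/andP [_ /(pm_edge pmN)] | /edgeA].
- move=> x; case: (boolP (x \in cover R)) => [|xR].
    by rewrite -coverAR => /bigcupP [B BA xB]; exists B; rewrite // inE BA orbT.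
  exists [set x; mate N x]; last exact: setU11.
  by move: xR; rewrite in_coverE !inE (mate_edge pmN) => ->.
- have inR x B : B \in N :\: R -> x \in B -> x \notin cover R.
    by rewrite inE => /andP [BR BN] xB; rewrite in_coverE -(pm_edgeE pmN BN xB).
  have inA x B : B \in A -> x \in B -> x \in cover R.
    by move=> BA xB; rewrite -coverAR; apply/bigcupP; exists B.
  move=> x B C; rewrite !inE -!(in_setD N R).
  case/orP=> [BNR|BA] /orP [CNR|CA] xB xC.
  + by apply: (pm_uniq pmN) xB xC; [move: BNR | move: CNR]; rewrite inE => /andP [].
  + by move: (inR _ _ BNR xB); rewrite (inA _ _ CA xC).
  + by move: (inR _ _ CNR xC); rewrite (inA _ _ BA xB).
  + case: (eqVneq B C) => // /(trivIsetP trivA B C BA CA) /disjointFr.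
    by move=> /(_ x xB); rewrite xC.
Qed.

End SubMatching.

Lemma rematch (N S : {set {set V}}) (Y : {set V}) (g : V -> V) :
  is_pm e N -> S \subset N -> Y != set0 ->
  [disjoint Y & mate N @: Y] -> {in Y &, injective g} -> g @: Y = mate N @: Y ->
  {in Y, forall y, e y (g y) && (g y != mate N y)} -> {in Y, forall y, y \notin cover S} ->
  ~~ forcing e N S.
Proof.
move=> pmN SN Y0 disjY ginj gY gP YS; set p := mate N.
have gYp y : y \in Y -> g y \in p @: Y by move=> yY; rewrite -gY imset_f.
have yg y z : y \in Y -> z \in Y -> y != g z.
  by move=> yY zY; apply: contraTneq (gYp z zY) => <-; rewrite (disjointFr disjY yY).
pose R := [set [set y; p y] | y in Y]; pose A := [set [set y; g y] | y in Y].
have RN : R \subset N by apply/subsetP => B /imsetP [y _ ->]; apply: mate_edge.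
have edgeA : {in A, forall B, edge_of B}.
  move=> B /imsetP [y yY ->]; have /andP [eyg _] := gP y yY.
  by exists y, (g y); rewrite eyg yg.
have trivA : trivIset A.
  apply/trivIsetP => B C /imsetP [y yY ->] /imsetP [z zY ->] BC.
  have yz : y != z by apply: contraNneq BC => ->.
  have gyz : g y != g z by apply: contra yz => /eqP /ginj ->.
  by apply: disjoint_set2; rewrite // ?yg // eq_sym yg.
have coverAR : cover A = cover R by rewrite !cover_pairs gY.
apply: (not_forcing (pm_exchange pmN RN edgeA trivA coverAR)).
- apply/subsetP => B BS; rewrite !inE (subsetP SN _ BS) andbT orbC.
  apply/orP; right; apply/imsetP => -[y yY EB].
  by move/negP: (YS y yY); apply; apply/bigcupP; exists B; rewrite // EB setU11.
- have [y yY] := set0Pn _ Y0; have /andP [_ gyp] := gP y yY.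
  apply: contraNneq gyp => EN; rewrite -(in_pmE pmN) -EN !inE orbC.
  by apply/orP; left; apply: imset_f.
Qed.

(* Following these neighbours from vertex to vertex must
   close an alternating cycle, so [S] does not force [N]. *)
Lemma orientation_not_forcing (N S : {set {set V}}) (X : {set V}) :
  is_pm e N -> S \subset N -> X != set0 ->
  {in X, forall x, mate N x \notin X} -> {in X, forall x, x \notin cover S} ->
  {in X, forall x, exists y, [&& e x y, y != mate N x & mate N y \in X]} ->
  ~~ forcing e N S.
Proof.
move=> pmN SN X0 Xp XS Xout; set p := mate N.
pose g x := odflt x [pick y | [&& e x y, y != p x & p y \in X]].
have gP : {in X, forall x, [&& e x (g x), g x != p x & p (g x) \in X]}.
  by move=> x /Xout [y Py]; rewrite /g; case: pickP => [z //|/(_ y)]; rewrite Py.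
have fX : (p \o g) @: X \subset X.
  by apply/subsetP => _ /imsetP [x xX ->]; case/and3P: (gP x xX).
have [Y /andP [Y0 YX] fY] := invariant_core X0 fX.
have gY : g @: Y = p @: Y.
  by rewrite -{2}fY -imset_comp; apply: eq_imset => x /=; rewrite /p (mateK pmN).
apply: (rematch pmN SN Y0 _ _ gY).
- apply/pred0P => x /=; apply/andP => -[xY /imsetP [y yY xE]].
  by move: (Xp y (subsetP YX _ yY)); rewrite -xE (subsetP YX _ xY).
- have /imset_injP finj : #|(p \o g) @: Y| == #|Y| by rewrite fY.
  by move=> y z yY zY Eg; apply: finj => //=; rewrite Eg.
- by move=> y /(subsetP YX) /gP /and3P [-> -> _].
- by move=> y /(subsetP YX) /XS.
Qed.

(* The alternating 4-cycle [x1 - mate x2 = x2 - mate x1 = x1], where [=] marks edges of [N]. *)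
Lemma alt4_not_forcing (N S : {set {set V}}) (x1 x2 : V) :
  is_pm e N -> S \subset N -> uniq [:: x1; x2; mate N x1; mate N x2] ->
  e x1 (mate N x2) -> e x2 (mate N x1) -> x1 \notin cover S -> x2 \notin cover S ->
  ~~ forcing e N S.
Proof.
move=> pmN SN /uniq4P [n12 n13 n14 n23 [n24 n34]] e12 e21 S1 S2.
apply: (orientation_not_forcing (X := [set x1; x2])) => //.
- by apply/set0Pn; exists x1; rewrite setU11.
- by move=> x; rewrite !inE => /orP [] /eqP ->;
    rewrite !negb_or ![mate N _ == _]eq_sym ?n13 ?n14 ?n23 ?n24.
- by move=> x; rewrite !inE => /orP [] /eqP ->.
- move=> x; rewrite !inE => /orP [] /eqP ->; [exists (mate N x2) | exists (mate N x1)];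
    by rewrite !(mateK pmN) !inE eqxx ?orbT ?e12 ?e21 ?n34 // eq_sym n34.
Qed.

(* The alternating 6-cycle [x1 - mate x2 = x2 - mate x3 = x3 - mate x1 = x1]. *)
Lemma alt6_not_forcing (N S : {set {set V}}) (x1 x2 x3 : V) :
  is_pm e N -> S \subset N -> uniq [:: x1; x2; x3; mate N x1; mate N x2; mate N x3] ->
  e x1 (mate N x2) -> e x2 (mate N x3) -> e x3 (mate N x1) ->
  x1 \notin cover S -> x2 \notin cover S -> x3 \notin cover S -> ~~ forcing e N S.
Proof.
move=> pmN SN; rewrite /= !inE !negb_or -!andbA.
move=> /and3P [n12 n13 /and3P [n14 n15 /and3P [n16 n23 /and3P [n24 n25
         /and3P [n26 n34 /and3P [n35 n36 /and3P [n45 n46 /andP [n56 _]]]]]]]].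
move=> e12 e23 e31 S1 S2 S3.
apply: (orientation_not_forcing (X := [set x1; x2; x3])) => //.
- by apply/set0Pn; exists x1; rewrite !inE eqxx.
- by move=> x; rewrite !inE -orbA => /or3P [] /eqP ->;
    rewrite !negb_or ![mate N _ == _]eq_sym ?n14 ?n15 ?n16 ?n24 ?n25 ?n26 ?n34 ?n35 ?n36.
- by move=> x; rewrite !inE -orbA => /or3P [] /eqP ->.
- move=> x; rewrite !inE -orbA => /or3P [] /eqP ->;
    [exists (mate N x2) | exists (mate N x3) | exists (mate N x1)];
    by rewrite !(mateK pmN) !inE eqxx ?orbT ?e12 ?e23 ?e31 ?n46 1?eq_sym ?n45 ?n56.
Qed.

Record dominating_square (S : {set {set V}}) (a b c d : V) : Prop := DominatingSquare {
  sq_uniq : uniq [:: a; b; c; d];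
  sq_ab : e a b; sq_cd : e c d; sq_ac : e a c; sq_bd : e b d;
  sq_free : {in [:: a; b; c; d], forall v, v \notin cover S};
  sq_dom : forall z, z \notin [:: a; b; c; d] -> (e z a || e z b) && (e z c || e z d) }.

Lemma square_flip S a b c d : dominating_square S a b c d -> dominating_square S b a d c.
Proof.
have memE z : (z \in [:: b; a; d; c]) = (z \in [:: a; b; c; d]).
  by rewrite !inE; case: (z == a); case: (z == b); case: (z == c); case: (z == d).
case=> uq eab ecd eac ebd free dom; split; rewrite // 1?e_sym //.
- by move: uq => /uniq4P [ab ac ad bc [bd cd]]; distinct.
- by move=> v; rewrite memE; apply: free.
- by move=> z; rewrite memE => /dom; rewrite orbC [e z d || _]orbC.
Qed.

Lemma square_swap S a b c d : dominating_square S a b c d -> dominating_square S c d a b.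
Proof.
have memE z : (z \in [:: c; d; a; b]) = (z \in [:: a; b; c; d]).
  by rewrite !inE; case: (z == a); case: (z == b); case: (z == c); case: (z == d).
case=> uq eab ecd eac ebd free dom; split; rewrite // 1?e_sym //.
- by move: uq => /uniq4P [ab ac ad bc [bd cd]]; distinct.
- by move=> v; rewrite memE; apply: free.
- by move=> z; rewrite memE => /dom; rewrite andbC.
Qed.

Section SquareCases.
Variables (N S : {set {set V}}) (a b c d : V).
Hypotheses (pmN : is_pm e N) (SN : S \subset N) (sq : dominating_square S a b c d).

Lemma square_free v : v \in [:: a; b; c; d] -> v \notin cover S.
Proof. by case: sq => _ _ _ _ _ free _; apply: free. Qed.

Lemma square_mate_free v : v \in [:: a; b; c; d] -> mate N v \notin cover S.
Proof. by move=> /square_free; rewrite (mate_cover pmN SN). Qed.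

Lemma square_dom z : z != a -> z != b -> z != c -> z != d -> (e z a || e z b) && (e z c || e z d).
Proof. by move=> za zb zc zd; apply: (sq_dom sq); rewrite !inE !negb_or za zb zc zd. Qed.

Ltac side := rewrite ?(mateK pmN);
  first [ done | solve [distinct] | by rewrite e_sym
        | by apply: square_free; rewrite !inE eqxx ?orbT
        | by apply: square_mate_free; rewrite !inE eqxx ?orbT ].

(* If [a] is
   matched to [b], either [c] is matched to [d] and the square is an alternating cycle, or
   the mates of [c] and [d] lie outside the square and close a 4- or 6-cycle with it. *)
Lemma square_mate_ab : mate N a = b -> ~~ forcing e N S.
Proof.
case: sq => uq eab ecd eac ebd _ _ mab; have [ab ac ad bc [bd cd]] := uniq4P uq.
have mba : mate N b = a by rewrite -mab (mateK pmN).
have [mcd|mcd] := eqVneq (mate N c) d.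
  by apply: (alt4_not_forcing (x1 := b) (x2 := c)); rewrite ?mba ?mcd //; side.
set pc := mate N c; set pd := mate N d.
have pca : pc != a by rewrite (mate_eqE pmN) ?mab ?mba // eq_sym.
have pcb : pc != b by rewrite (mate_eqE pmN) ?mab ?mba // eq_sym.
have pcc : pc != c := mate_neq pmN c.
have pda : pd != a by rewrite (mate_eqE pmN) ?mab ?mba // eq_sym.
have pdb : pd != b by rewrite (mate_eqE pmN) ?mab ?mba // eq_sym.
have pdc : pd != c by rewrite (mate_eqE pmN) ?mab ?mba // eq_sym.
have pdd : pd != d := mate_neq pmN d.
have pcd : pc != pd by rewrite (inj_eq (can_inj (mateK pmN))).
have /andP [+ _] := square_dom pda pdb pdc pdd; case/orP => [epda | epdb].
  by apply: (alt4_not_forcing (x1 := b) (x2 := pd)); rewrite ?mba //; side.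
have /andP [+ _] := square_dom pca pcb pcc mcd; case/orP => [epca | epcb].
  by apply: (alt6_not_forcing (x1 := b) (x2 := d) (x3 := pc)); rewrite ?mba //; side.
by apply: (alt4_not_forcing (x1 := a) (x2 := pc)); rewrite ?mab //; side.
Qed.

Lemma square_mate_ac : mate N a = c -> ~~ forcing e N S.
Proof.
case: sq => uq eab ecd eac ebd _ _ mac; have [ab ac ad bc [bd cd]] := uniq4P uq.
have mca : mate N c = a by rewrite -mac (mateK pmN).
have [mbd|mbd] := eqVneq (mate N b) d.
  have mdb : mate N d = b by rewrite -mbd (mateK pmN).
  by apply: (alt4_not_forcing (x1 := a) (x2 := d)); rewrite ?mac ?mdb //; side.
set pb := mate N b; set pd := mate N d.
have pba : pb != a by rewrite (mate_eqE pmN) ?mac ?mca // eq_sym.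
have pbb : pb != b := mate_neq pmN b.
have pbc : pb != c by rewrite (mate_eqE pmN) ?mac ?mca // eq_sym.
have pda : pd != a by rewrite (mate_eqE pmN) ?mac ?mca // eq_sym.
have pdb : pd != b by rewrite (mate_eqE pmN) eq_sym.
have pdc : pd != c by rewrite (mate_eqE pmN) ?mac ?mca // eq_sym.
have pdd : pd != d := mate_neq pmN d.
have pbd : pb != pd by rewrite (inj_eq (can_inj (mateK pmN))).
have /andP [_ +] := square_dom pba pbb pbc mbd; case/orP => [epbc | epbd].
  by apply: (alt4_not_forcing (x1 := c) (x2 := b)); rewrite ?mca //; side.
have /andP [+ _] := square_dom pda pdb pdc pdd; case/orP => [epda | epdb].
  by apply: (alt4_not_forcing (x1 := a) (x2 := d)); rewrite ?mac //; side.
by apply: (alt4_not_forcing (x1 := pb) (x2 := pd)); side.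
Qed.

Lemma square_mate_ad : mate N a = d -> ~~ forcing e N S.
Proof.
case: sq => uq eab ecd eac ebd _ _ mad; have [ab ac ad bc [bd cd]] := uniq4P uq.
have mda : mate N d = a by rewrite -mad (mateK pmN).
have [mbc|mbc] := eqVneq (mate N b) c.
  have mcb : mate N c = b by rewrite -mbc (mateK pmN).
  by apply: (alt4_not_forcing (x1 := a) (x2 := c)); rewrite ?mad ?mcb //; side.
set pb := mate N b; set pc := mate N c.
have pba : pb != a by rewrite (mate_eqE pmN) ?mad ?mda // eq_sym.
have pbb : pb != b := mate_neq pmN b.
have pbd : pb != d by rewrite (mate_eqE pmN) ?mad ?mda // eq_sym.
have pca : pc != a by rewrite (mate_eqE pmN) ?mad ?mda // eq_sym.
have pcb : pc != b by rewrite (mate_eqE pmN) eq_sym.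
have pcc : pc != c := mate_neq pmN c.
have pcd : pc != d by rewrite (mate_eqE pmN) ?mad ?mda // eq_sym.
have pbc : pb != pc by rewrite (inj_eq (can_inj (mateK pmN))).
have /andP [+ _] := square_dom pca pcb pcc pcd; case/orP => [epca | epcb].
  by apply: (alt4_not_forcing (x1 := a) (x2 := c)); rewrite ?mad //; side.
have /andP [_ +] := square_dom pba pbb mbc pbd; case/orP => [epbc | epbd].
  by apply: (alt4_not_forcing (x1 := pb) (x2 := pc)); side.
by apply: (alt6_not_forcing (x1 := d) (x2 := b) (x3 := c)); rewrite ?mda //; side.
Qed.

Lemma square_avoid z v : z \notin [:: a; b; c; d] -> v \in [:: a; b; c; d] ->
  exists2 y, y \in [:: a; b; c; d] & e z y && (y != v).
Proof.
have [ab ac ad bc [bd cd]] := uniq4P (sq_uniq sq).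
move=> /(sq_dom sq) /andP [zab zcd]; rewrite !inE => /or4P [] /eqP ->.
- by case/orP: zcd => zy; [exists c | exists d]; rewrite ?inE ?eqxx ?orbT ?zy // eq_sym.
- by case/orP: zcd => zy; [exists c | exists d]; rewrite ?inE ?eqxx ?orbT ?zy // eq_sym.
- by case/orP: zab => zy; [exists a | exists b]; rewrite ?inE ?eqxx ?orbT ?zy.
- by case/orP: zab => zy; [exists a | exists b]; rewrite ?inE ?eqxx ?orbT ?zy.
Qed.

(* All corners are matched outside the square: each outside mate steps to a square
   neighbour other than its own mate, and the criterion applies to these outside mates. *)
Lemma square_mates_outside :
  {in [:: a; b; c; d], forall v, mate N v \notin [:: a; b; c; d]} -> ~~ forcing e N S.
Proof.
move=> out; apply: (orientation_not_forcing (X := [set mate N v | v in [:: a; b; c; d]])) => //.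
- by apply/set0Pn; exists (mate N a); apply: imset_f; rewrite inE eqxx.
- move=> _ /imsetP [v vQ ->]; rewrite (mateK pmN); apply/imsetP => -[w wQ vw].
  by move: (out w wQ); rewrite -vw vQ.
- by move=> _ /imsetP [v vQ ->]; apply: square_mate_free.
- move=> _ /imsetP [v vQ ->]; have [y yQ /andP [ey yv]] := square_avoid (out v vQ) vQ.
  by exists y; rewrite ey (mateK pmN) yv imset_f.
Qed.

End SquareCases.

(* Lower-bound core: no set of matching edges avoiding a dominating square forces [N].  By
   the symmetries of the square, the cases above cover all positions of the mates. *)
Lemma square_not_forcing (N S : {set {set V}}) (a b c d : V) :
  is_pm e N -> S \subset N -> dominating_square S a b c d -> ~~ forcing e N S.
Proof.
move=> pmN SN sq.
case: (mate N a =P b) => [|mab]; first exact: square_mate_ab pmN SN sq.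
case: (mate N a =P c) => [|mac]; first exact: square_mate_ac pmN SN sq.
case: (mate N a =P d) => [|mad]; first exact: square_mate_ad pmN SN sq.
case: (mate N b =P c) => [|mbc]; first exact: square_mate_ad pmN SN (square_flip sq).
case: (mate N b =P d) => [|mbd]; first exact: square_mate_ac pmN SN (square_flip sq).
case: (mate N c =P d) => [|mcd]; first exact: square_mate_ab pmN SN (square_swap sq).
apply: (square_mates_outside pmN SN sq) => v; rewrite !inE => /or4P [] /eqP ->; rewrite !negb_or;
  by repeat (apply/andP; split); first [ exact: mate_neq | apply/eqP; assumption
    | rewrite (mate_eqE pmN) eq_sym; apply/eqP; assumption ].
Qed.

Lemma forcing_but_one (M : {set {set V}}) A : is_pm e M -> A \in M -> forcing e M (M :\ A).
Proof.
move=> pmM AM; rewrite /forcing subsetDl /=; apply/forallP => M'; apply/implyP.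
case/andP=> pmM' sub; apply/eqP/esym; apply: (pm_eq_mate pmM pmM') => x.
have RM : [set A] \subset M by rewrite sub1set.
have agree : M :\: [set A] \subset M' by [].
case: (boolP (x \in cover [set A])) => [xA|xA]; last by rewrite (mate_outside pmM RM pmM').
have := mate_inside pmM RM pmM' agree xA; rewrite cover1 in xA *.
rewrite (pm_edgeE pmM AM xA) !inE => /orP [] /eqP // /eqP.
by rewrite (negbTE (mate_neq pmM' x)).
Qed.

(* Edges [{a, b}] and [{c, d}] are alternating when [a c] and [b d] are edges too, i.e.
   they lie on an alternating 4-cycle. *)
Definition alternating (A B : {set V}) : Prop :=
  exists a b c d, [/\ A = [set a; b], B = [set c; d], e a c & e b d].

Definition pairwise_alternating (M : {set {set V}}) : Prop :=
  {in M &, forall A B, A != B -> alternating A B}.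

Lemma alternating_sym A B : alternating A B -> alternating B A.
Proof.
by case=> [a [b [c [d [-> -> eac ebd]]]]]; exists c, d, a, b; rewrite e_sym [e d b]e_sym.
Qed.

Lemma alternating_adj A a b z : alternating A [set a; b] -> z \in A -> e z a || e z b.
Proof.
case=> [p [q [r [s [-> Eab epr eqs]]]]] zpq.
have rab : r \in [set a; b] by rewrite Eab setU11.
have sab : s \in [set a; b] by rewrite Eab !inE eqxx orbT.
move: zpq rab sab epr eqs; rewrite !inE.
by case/orP=> /eqP -> /orP [] /eqP -> /orP [] /eqP -> => h1 h2; rewrite ?h1 ?h2 ?orbT.
Qed.

Lemma pm_two_edges (M : {set {set V}}) a b c d :
  is_pm e M -> [set a; b] \in M -> [set c; d] \in M -> [set a; b] != [set c; d] ->
  [/\ uniq [:: a; b; c; d], mate M a = b & mate M c = d].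
Proof.
move=> pmM abM cdM AB; have neq := pm_edges_neq pmM abM cdM AB.
have in1 (x y : V) : x \in [set x; y] by rewrite setU11.
have in2 (x y : V) : y \in [set x; y] by rewrite !inE eqxx orbT.
have ba : b != a := pm_edge_neq pmM abM; have dc : d != c := pm_edge_neq pmM cdM.
have ac := neq _ _ (in1 a b) (in1 c d); have ad := neq _ _ (in1 a b) (in2 c d).
have bc := neq _ _ (in2 a b) (in1 c d); have bd := neq _ _ (in2 a b) (in2 c d).
by split; [distinct | apply/esym/eqP; rewrite -(in_pmE pmM) ..].
Qed.

Lemma alternating_not_forcing (M S : {set {set V}}) A B :
  is_pm e M -> S \subset M -> A \in M -> B \in M -> A != B ->
  A \notin S -> B \notin S -> alternating A B -> ~~ forcing e M S.
Proof.
move=> pmM SM AM BM AB AS BS [a [b [c [d [EA EB eac ebd]]]]]; subst A B.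
have [/uniq4P [ab ac ad bc [bd cd]] mab mcd] := pm_two_edges pmM AM BM AB.
have mdc : mate M d = c by rewrite -mcd (mateK pmM).
apply: (alt4_not_forcing (x1 := a) (x2 := d)); rewrite ?mab ?mdc // 1?e_sym //.
- by distinct.
- by rewrite (in_coverE pmM SM) mab.
- by rewrite (in_coverE pmM SM) mdc setUC.
Qed.

Lemma alternating_forcing_large (M S : {set {set V}}) :
  is_pm e M -> pairwise_alternating M -> forcing e M S -> #|M| - 1 <= #|S|.
Proof.
move=> pmM altM fS; have SM := forcing_sub fS; rewrite leqNgt; apply/negP => small.
have /card_gt1P [A [B [AMS BMS AB]]] : 1 < #|M :\: S| by rewrite cardsDS //; lia.
move: AMS BMS; rewrite !inE => /andP [AS AM] /andP [BS BM].
by move: fS; apply/negP/(alternating_not_forcing pmM SM AM BM AB AS BS)/altM.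
Qed.

(* If [M'] agrees with [M] off two edges [A] and [B] but does not contain [A], then [M']
   re-matches both ends of [A] into [B]; hence [A] and [B] are alternating. *)
Lemma rematched_alternating (M M' : {set {set V}}) A B :
  is_pm e M -> is_pm e M' -> A \in M -> B \in M -> A != B ->
  M :\: [set A; B] \subset M' -> A \notin M' -> alternating A B.
Proof.
move=> pmM pmM' AM BM AB agree AM'.
have RM : [set A; B] \subset M by rewrite subUset !sub1set AM BM.
have into x : x \in A -> mate M' x \in B.
  move=> xA; have xR : x \in cover [set A; B] by apply/bigcupP; exists A; rewrite ?setU11.
  case/bigcupP: (mate_inside pmM RM pmM' agree xR) => C; rewrite !inE.
  case/orP=> /eqP -> // yA; case/negP: AM'.
  by rewrite (pm_edge_pair pmM AM xA yA) ?mate_edge // eq_sym mate_neq.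
have [a [b [ab _ EA]]] := pm_edge pmM AM.
have aA : a \in A by rewrite EA setU11.
have bA : b \in A by rewrite EA !inE eqxx orbT.
exists a, b, (mate M' a), (mate M' b); split => //; try exact: mate_adj pmM' _.
by apply: (pm_edge_pair pmM BM (into a aA) (into b bA)); rewrite (inj_eq (can_inj (mateK pmM'))).
Qed.

Lemma non_alternating_forcing (M : {set {set V}}) A B :
  is_pm e M -> A \in M -> B \in M -> A != B -> ~ alternating A B ->
  forcing e M (M :\: [set A; B]).
Proof.
move=> pmM AM BM AB nalt; rewrite /forcing subsetDl /=; apply/forallP => M'; apply/implyP.
case/andP=> pmM' agree; apply/eqP/esym/(pm_subset_eq pmM pmM')/subsetP => C CM.
case: (boolP (C \in [set A; B])) => [|CAB]; last by apply: (subsetP agree); rewrite inE CAB.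
rewrite !inE => /orP [] /eqP ->; apply: contraT => CM'; case: nalt.
  exact: rematched_alternating pmM pmM' AM BM AB agree CM'.
apply/alternating_sym/(rematched_alternating pmM pmM' BM AM) => //; first by rewrite eq_sym.
by rewrite setUC.
Qed.

Lemma alternating_of_large (M : {set {set V}}) :
  is_pm e M -> #|M| - 1 <= fGM e M -> pairwise_alternating M.
Proof.
move=> pmM large A B AM BM AB; apply: NNPP => nalt.
have := bigmin_le (fun S : {set {set V}} => #|S|) #|M| (non_alternating_forcing pmM AM BM AB nalt).
have two : 1 < #|M| by apply/card_gt1P; exists A, B.
rewrite cardsDS ?subUset ?sub1set ?AM ?BM // cards2 AB; rewrite /fGM in large; lia.
Qed.

Lemma alternating_square (M S : {set {set V}}) a b c d :
  is_pm e M -> pairwise_alternating M -> [set a; b] \in M -> [set c; d] \in M ->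
  [set a; b] != [set c; d] -> e a c -> e b d ->
  {in [:: a; b; c; d], forall v, v \notin cover S} -> dominating_square S a b c d.
Proof.
move=> pmM altM abM cdM AB eac ebd free; have [uq mab mcd] := pm_two_edges pmM abM cdM AB.
have side p q z : [set p; q] \in M -> z != p -> z != q -> e z p || e z q.
  move=> pqM zp zq; apply: (alternating_adj (A := [set z; mate M z])); last exact: setU11.
  apply: altM (mate_edge pmM z) pqM _; apply/negP => /eqP Ez.
  have : z \in [set p; q] by rewrite -Ez setU11.
  by rewrite !inE (negbTE zp) (negbTE zq).
split => //; [by rewrite -mab mate_adj | by rewrite -mcd mate_adj |].
by move=> z; rewrite !inE !negb_or => /and4P [za zb zc zd]; rewrite side ?(side c d).
Qed.

(* A smaller [S] meets at most [#|M| - 2] edges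
   of [M], and two untouched edges of [M] form a dominating square avoiding [S]. *)
Lemma alternating_forcing_lower (M M' S : {set {set V}}) :
  is_pm e M -> pairwise_alternating M -> is_pm e M' -> forcing e M' S -> #|M|./2 <= #|S|.
Proof.
move=> pmM altM pmM' fS; have SM' := forcing_sub fS; rewrite leqNgt; apply/negP => small.
pose H := [set [set x; mate M x] | x in cover S].
have HM : H \subset M by apply/subsetP => _ /imsetP [x _ ->]; apply: mate_edge.
have HS : #|H| <= 2 * #|S| by rewrite -(card_cover_pm pmM' SM') leq_imset_card.
have /card_gt1P [A [B [AMH BMH AB]]] : 1 < #|M :\: H|.
  by rewrite cardsDS //; apply: half_room small HS.
move: AMH BMH; rewrite !inE => /andP [AH AM] /andP [BH BM].
have [a [b [c [d [EA EB eac ebd]]]]] := altM A B AM BM AB; subst A B.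
have free C v : C \in M -> C \notin H -> v \in C -> v \notin cover S.
  by move=> CM CH vC; apply: contra CH => vS; rewrite (pm_edgeE pmM CM vC); apply/imsetP; exists v.
move: fS; apply/negP/(square_not_forcing pmM' SM').
apply: (alternating_square pmM altM AM BM AB eac ebd) => v.
rewrite !inE orbA => /orP [vab | vcd]; [apply: free AM AH _ | apply: free BM BH _];
  by rewrite !inE.
Qed.

Lemma fGM_le (M S : {set {set V}}) : forcing e M S -> fGM e M <= #|S|.
Proof. exact: bigmin_le. Qed.

Lemma fGM_ge (M : {set {set V}}) k :
  k <= #|M| -> (forall S, forcing e M S -> k <= #|S|) -> k <= fGM e M.
Proof. exact: bigmin_ge. Qed.

Lemma fmin_le (M : {set {set V}}) : is_pm e M -> fmin e <= fGM e M.
Proof. exact: bigmin_le. Qed.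

Lemma fmin_ge k : k <= #|V| -> (forall M, is_pm e M -> k <= fGM e M) -> k <= fmin e.
Proof. exact: bigmin_ge. Qed.

Lemma Fmax_ge (M : {set {set V}}) : is_pm e M -> fGM e M <= Fmax e.
Proof. by move=> pmM; apply: (leq_bigmax_cond (P := fun M => is_pm e M)). Qed.

Lemma Fmax_le k : (forall M, is_pm e M -> fGM e M <= k) -> Fmax e <= k.
Proof. by move=> hk; apply/bigmax_leqP. Qed.

Lemma Fmax_attained : has_pm e -> exists2 M, is_pm e M & fGM e M = Fmax e.
Proof.
case/existsP=> M0 pm0; rewrite /Fmax (bigmax_eq_arg M0) //.
by case: arg_maxnP => // M pmM _; exists M.
Qed.

Lemma fGM_le_pred (M : {set {set V}}) : is_pm e M -> 0 < #|M| -> fGM e M <= #|M| - 1.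
Proof.
move=> pmM /card_gt0P [A AM]; apply: leq_trans (fGM_le (forcing_but_one pmM AM)) _.
by have := cardsD1 A M; rewrite AM /=; lia.
Qed.

Lemma alternating_fmin (M : {set {set V}}) :
  is_pm e M -> pairwise_alternating M -> #|M|./2 <= fmin e.
Proof.
move=> pmM altM; have cardV := pm_card pmM.
apply: fmin_ge => [|M' pmM']; first by rewrite cardV -divn2; lia.
apply: fGM_ge => [|S]; last exact: alternating_forcing_lower.
by have := pm_card pmM'; rewrite cardV -divn2; lia.
Qed.

Lemma fmin_bounds_of_Fmax n :
  #|V| = 2 * n -> 0 < n -> has_pm e -> Fmax e = n - 1 -> n./2 <= fmin e <= n - 1.
Proof.
move=> cardV n0 hpm Fn; have [M pmM fM] := Fmax_attained hpm.
have cardM : #|M| = n by have := pm_card pmM; rewrite cardV; lia.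
have altM : pairwise_alternating M by apply: alternating_of_large; rewrite // fM Fn cardM.
rewrite -cardM (alternating_fmin pmM altM) /=.
by apply: leq_trans (fmin_le pmM) (fGM_le_pred pmM _); rewrite cardM.
Qed.

Definition universal (u : V) : Prop := forall x, x != u -> e x u.

Lemma universal_alternating (M : {set {set V}}) :
  is_pm e M -> {in M, forall A : {set V}, exists2 u, u \in A & universal u} ->
  pairwise_alternating M.
Proof.
move=> pmM hub A B AM BM AB; have [u uA univ_u] := hub A AM; have [v vB univ_v] := hub B BM.
have uv : u != v := pm_edges_neq pmM AM BM AB uA vB.
exists (mate M u), u, v, (mate M v); split.
- by rewrite setUC -(pm_edgeE pmM AM uA).
- by rewrite {1}(pm_edgeE pmM BM vB).
- apply: univ_v; apply: (pm_edges_neq pmM AM BM AB) => //.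
  by rewrite (pm_edgeE pmM AM uA) !inE eqxx orbT.
- rewrite e_sym; apply: univ_u; apply: (pm_edges_neq pmM BM AM) => //; first by rewrite eq_sym.
  by rewrite (pm_edgeE pmM BM vB) !inE eqxx orbT.
Qed.

(* Two free universal vertices lie on an alternating 4-cycle avoiding [S] (through a second
   free edge if they are mates), so [S] does not force [N]. *)
Lemma universal_pair_not_forcing (N S : {set {set V}}) u v :
  is_pm e N -> S \subset N -> u != v -> universal u -> universal v ->
  u \notin cover S -> v \notin cover S -> 1 < #|N :\: S| -> ~~ forcing e N S.
Proof.
move=> pmN SN uv univ_u univ_v uS vS big.
have mu : mate N u != u := mate_neq pmN u; have mv : mate N v != v := mate_neq pmN v.
have [muv|muv] := eqVneq (mate N u) v; last first.
  have mvu : mate N v != u by rewrite (mate_eqE pmN) eq_sym.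
  have mumv : mate N u != mate N v by rewrite (inj_eq (can_inj (mateK pmN))).
  apply: (alt4_not_forcing (x1 := u) (x2 := v)) => //; first by distinct.
    by rewrite e_sym; apply: univ_u.
  by rewrite e_sym; apply: univ_v.
have [F FNS Fuv] : exists2 F, F \in N :\: S & F != [set u; v].
  case/card_gt1P: big => [F1 [F2 [F1NS F2NS F12]]].
  by case: (eqVneq F1 [set u; v]) => E1; [exists F2; rewrite // -E1 eq_sym | exists F1].
move: FNS; rewrite inE => /andP [FS FN]; have [x [y [_ _ EF]]] := pm_edge pmN FN.
have xF : x \in F by rewrite EF setU11.
have uvN : [set u; v] \in N by rewrite -muv mate_edge.
have neq z : z \in F -> (z != u) && (z != v).
  move=> zF; rewrite !(pm_edges_neq pmN FN uvN Fuv zF) //; by rewrite !inE eqxx ?orbT.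
have mxF : mate N x \in F by rewrite (pm_edgeE pmN FN xF) !inE eqxx orbT.
have /andP [xu xv] := neq x xF; have /andP [mxu mxv] := neq _ mxF.
have mx : mate N x != x := mate_neq pmN x.
apply: (alt4_not_forcing (x1 := u) (x2 := x)) => //; rewrite ?muv; first by distinct.
- by rewrite e_sym; apply: univ_u.
- exact: univ_v.
- by rewrite (in_coverE pmN SN) -(pm_edgeE pmN FN xF).
Qed.

(* Hence a forcing set must cover all but at most one of any set [U] of universal vertices. *)
Lemma universal_forcing_lower (N S : {set {set V}}) (U : {set V}) :
  is_pm e N -> forcing e N S -> {in U, forall u, universal u} -> (#|U|.-1)./2 <= #|S|.
Proof.
move=> pmN fS univU; have SN := forcing_sub fS; rewrite leqNgt; apply/negP => small.
have coverS := card_cover_pm pmN SN.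
have UV : #|U| <= 2 * #|N| by rewrite -(pm_card pmN) max_card.
have /card_gt1P [u [v [uSU vSU uv]]] : 1 < #|U :\: cover S|.
  have := subset_leq_card (subsetIr U (cover S)); rewrite cardsD coverS.
  by move: small; rewrite -divn2; lia.
have big : 1 < #|N :\: S| by rewrite cardsDS //; move: small UV; rewrite -divn2; lia.
move: uSU vSU; rewrite !inE => /andP [uS uU] /andP [vS vU].
by move: fS; apply/negP/(universal_pair_not_forcing pmN SN uv (univU u uU) (univU v vU)).
Qed.

End PerfectMatchings.

Definition buddy (k : nat) : nat := if k %% 2 == 0 then k.+1 else k.-1.

Lemma buddy_spec k : (k %% 2 = 0 /\ buddy k = k.+1) \/ (k %% 2 = 1 /\ buddy k = k.-1).
Proof. by rewrite /buddy; case: ifP => /eqP; lia. Qed.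

Lemma buddyK : involutive buddy.
Proof.
move=> k; case: (buddy_spec k) => -[k2 ->];
  [case: (buddy_spec k.+1) | case: (buddy_spec k.-1)] => -[? ->]; lia.
Qed.

Lemma buddy_neq k : buddy k != k.
Proof. by case: (buddy_spec k) => -[k2 ->]; lia. Qed.

Lemma buddy_half k : buddy k %/ 2 = k %/ 2.
Proof. by case: (buddy_spec k) => -[k2 ->]; lia. Qed.

Lemma buddy_lt n k : k < 2 * n -> buddy k < 2 * n.
Proof. by case: (buddy_spec k) => -[k2 ->]; lia. Qed.

Lemma half_eq_buddy x y : x %/ 2 = y %/ 2 -> x != y -> y = buddy x.
Proof. by case: (buddy_spec x) => -[k2 ->]; lia. Qed.

Definition opposite (n k : nat) : nat := if k < n then k + n else k - n.

Lemma opposite_spec n k :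
  (k < n /\ opposite n k = k + n) \/ (n <= k /\ opposite n k = k - n).
Proof. by rewrite /opposite; case: ltnP; [left | right]. Qed.

Definition ord_lift N (f : nat -> nat) (i : 'I_N) : 'I_N := insubd i (f i).

Lemma ord_liftE N (f : nat -> nat) (i : 'I_N) : f i < N -> val (ord_lift f i) = f i.
Proof. by move=> fi; rewrite /ord_lift val_insubd fi. Qed.

Lemma card_ord_lt N k : k <= N -> #|[set i : 'I_N | i < k]| = k.
Proof.
move=> kN; have inj : injective (widen_ord kN).
  by move=> i j /(congr1 (@nat_of_ord N)) /= /val_inj.
rewrite -[RHS]card_ord -cardsT -(card_imset _ inj).
apply: eq_card => i; rewrite inE; apply/idP/imsetP => [ik|[j _ ->]]; last by rewrite /= ltn_ord.
by exists (Ordinal ik); last by apply: val_inj.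
Qed.

Section HubGraph.
Variables n m : nat.
Hypotheses (m_lt_n : m < n) (n_le : n <= 2 * m + 1).

Definition hub_graph : rel 'I_(2 * n) :=
  fun i j => (i != j :> nat) && [|| i <= 2 * m, j <= 2 * m | i %/ 2 == j %/ 2].

Lemma hub_simple : simple_graph hub_graph.
Proof.
split=> [x|x y]; first by rewrite /hub_graph eqxx.
by rewrite /hub_graph eq_sym orbCA [y %/ 2 == _]eq_sym.
Qed.

Lemma hub_sym : forall x y, hub_graph x y = hub_graph y x.
Proof. by case: hub_simple. Qed.

Lemma hub_universal (u : 'I_(2 * n)) : u <= 2 * m -> universal hub_graph u.
Proof. by move=> hu x xu; rewrite /hub_graph val_eqE xu hu orbT. Qed.

Definition bud : 'I_(2 * n) -> 'I_(2 * n) := ord_lift buddy.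
Definition opp : 'I_(2 * n) -> 'I_(2 * n) := ord_lift (opposite n).

Lemma budE i : (bud i : nat) = buddy i.
Proof. by apply: ord_liftE; apply: buddy_lt. Qed.

Lemma oppE i : (opp i : nat) = opposite n i.
Proof. by apply: ord_liftE; case: (opposite_spec n i) => -[? ->]; have := ltn_ord i; lia. Qed.

Lemma budK : involutive bud.
Proof. by move=> x; apply: ord_inj; rewrite !budE buddyK. Qed.

Lemma bud_neq x : bud x != x.
Proof. by rewrite -val_eqE /= budE buddy_neq. Qed.

Lemma bud_adj x : hub_graph x (bud x).
Proof. by rewrite /hub_graph budE eq_sym buddy_neq buddy_half eqxx !orbT. Qed.

Definition buddies := pairing bud.
Definition opposites := pairing opp.

Lemma buddies_pm : is_pm hub_graph buddies.
Proof. exact: pairing_pm budK bud_neq bud_adj. Qed.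

Lemma mate_buddies : mate buddies =1 bud.
Proof. exact: mate_pairing budK bud_neq bud_adj. Qed.

Lemma opposites_pm : is_pm hub_graph opposites.
Proof.
apply: pairing_pm => x; have := ltn_ord x.
- move=> hx; apply: ord_inj; rewrite !oppE.
  case: (opposite_spec n x) => -[? ->];
    [case: (opposite_spec n (x + n)) | case: (opposite_spec n (x - n))] => -[? ->]; lia.
- by rewrite -val_eqE /= oppE; case: (opposite_spec n x) => -[? ->]; lia.
- by rewrite /hub_graph oppE; case: (opposite_spec n x) => -[? ->] /=; lia.
Qed.

Lemma hub_pm_card M : is_pm hub_graph M -> #|M| = n.
Proof. by move=> /(pm_card); rewrite card_ord; lia. Qed.

(* Every edge of [opposites] has an end in [[0, n)], hence a hub. *)
Lemma opposites_alternating : pairwise_alternating hub_graph opposites.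
Proof.
apply: (universal_alternating hub_sym opposites_pm) => _ /imsetP [x _ ->].
case: (ltnP x n) => xn; first by exists x; rewrite ?setU11 //; apply: hub_universal; lia.
exists (opp x); first by rewrite !inE eqxx orbT.
by apply: hub_universal; rewrite oppE; case: (opposite_spec n x) => -[? ->]; have := ltn_ord x; lia.
Qed.

Lemma hub_Fmax : Fmax hub_graph = n - 1.
Proof.
apply/eqP; rewrite eqn_leq; apply/andP; split.
  apply: Fmax_le => M pmM; apply: leq_trans (fGM_le_pred pmM _) _; rewrite hub_pm_card //; lia.
apply: leq_trans (Fmax_ge opposites_pm); have cardO := hub_pm_card opposites_pm.
apply: fGM_ge => [|S]; first by rewrite cardO leq_subr.
by move/(alternating_forcing_large hub_sym opposites_pm opposites_alternating); rewrite cardO.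
Qed.

(* The [2 m + 1] hubs force every forcing set to have at least [m] edges. *)
Lemma hub_fmin_ge : m <= fmin hub_graph.
Proof.
apply: fmin_ge => [|M pmM]; first by rewrite card_ord; lia.
apply: fGM_ge => [|S fS]; first by rewrite hub_pm_card //; lia.
have := universal_forcing_lower hub_sym pmM fS (U := [set i : 'I_(2 * n) | i < (2 * m).+1]).
rewrite card_ord_lt /=; last lia.
have -> : (2 * m)./2 = m by rewrite mul2n doubleK.
by apply=> u; rewrite inE; apply: hub_universal.
Qed.

(* Once the first [2 m] vertices are matched to their buddies, the matching is [buddies]:
   the hub [2 m] is the only possible partner of the non-hub [2 m + 1], and every other
   non-hub is then left with its buddy. *)
Lemma buddies_forced M : is_pm hub_graph M ->
  (forall x : 'I_(2 * n), x < 2 * m -> mate M x = bud x) -> M = buddies.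
Proof.
move=> pmM low; have muK : involutive (mate M) := mateK pmM.
have adj x : hub_graph x (mate M x) := mate_adj hub_sym pmM x.
have high (x : 'I_(2 * n)) : 2 * m <= x -> 2 * m <= mate M x.
  move=> hx; rewrite leqNgt; apply/negP => hy; have := low _ hy.
  rewrite muK => /(congr1 (@nat_of_ord _)); rewrite budE.
  by have := buddy_half (mate M x); lia.
have h_lt : 2 * m < 2 * n by lia.
have h'_lt : 2 * m + 1 < 2 * n by lia.
pose h := Ordinal h_lt; pose h' := Ordinal h'_lt.
have mu_h' : mate M h' = h.
  by apply: ord_inj; have := adj h'; have := high h'; rewrite /hub_graph /=; lia.
have mu_h : mate M h = h' by rewrite -mu_h' muK.
apply: (pm_eq_mate pmM buddies_pm) => x; rewrite mate_buddies; apply: ord_inj; rewrite budE.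
case: (ltnP x (2 * m)) => [xl|xh]; first by rewrite low // budE.
have [xE|xh'] := eqVneq x h; first by rewrite xE mu_h /=; have := buddy_spec (2 * m); lia.
have [xE'|xh''] := eqVneq x h'; first by rewrite xE' mu_h' /=; have := buddy_spec (2 * m + 1); lia.
have yh : mate M x != h by apply: contraNneq xh'' => E; apply/eqP; rewrite -(muK x) E mu_h.
have yh' : mate M x != h' by apply: contraNneq xh' => E; apply/eqP; rewrite -(muK x) E mu_h'.
move: xh' xh'' yh yh'; rewrite -!val_eqE /= => xh' xh'' yh yh'.
have := adj x; have := high x xh; rewrite /hub_graph => hy /andP [xy hxy].
by apply: half_eq_buddy => //; lia.
Qed.

Definition low_buddies := [set A in buddies | A \subset [set i : 'I_(2 * n) | i < 2 * m]].

Lemma low_buddy_edge (x : 'I_(2 * n)) : x < 2 * m -> [set x; bud x] \in low_buddies.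
Proof.
move=> xl; rewrite inE; apply/andP; split; first by apply/imsetP; exists x.
apply/subsetP => y; rewrite !inE => /orP [] /eqP -> //.
by rewrite budE; have := buddy_half x; lia.
Qed.

Lemma low_buddies_forcing : forcing hub_graph buddies low_buddies.
Proof.
apply/andP; split; first by apply/subsetP => A; rewrite inE => /andP [].
apply/forallP => M; apply/implyP => /andP [pmM sub]; apply/eqP.
apply: (buddies_forced pmM) => x xl; apply/esym/eqP; rewrite -(in_pmE pmM).
exact: (subsetP sub) (low_buddy_edge xl).
Qed.

Lemma card_low_buddies : #|low_buddies| = m.
Proof.
have sub : low_buddies \subset buddies by apply/subsetP => A; rewrite inE => /andP [].
suff : 2 * #|low_buddies| = 2 * m by lia.
rewrite -(card_cover_pm buddies_pm sub) -[2 * m](@card_ord_lt (2 * n)); last by lia.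
apply: eq_card => x; rewrite inE; apply/bigcupP/idP => [[A] | xl].
  by rewrite inE => /andP [_ /subsetP AL] /AL; rewrite inE.
by exists [set x; bud x]; rewrite ?low_buddy_edge ?setU11.
Qed.

Lemma hub_fmin : fmin hub_graph = m.
Proof.
apply/eqP; rewrite eqn_leq hub_fmin_ge andbT; apply: leq_trans (fmin_le buddies_pm) _.
by rewrite -[X in _ <= X]card_low_buddies; apply: fGM_le low_buddies_forcing.
Qed.

End HubGraph.

Arguments hub_graph : clear implicits.
Arguments buddies : clear implicits.

Theorem theorem5p7 (n : nat) (hn : 1 <= n) :
  (forall e : rel 'I_(2 * n),
     simple_graph e -> has_pm e -> Fmax e = n - 1 ->
     n./2 <= fmin e <= n - 1) /\
  (forall m : nat, n./2 <= m <= n - 1 ->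
     exists e : rel 'I_(2 * n),
       [/\ simple_graph e, has_pm e, Fmax e = n - 1 & fmin e = m]).
Proof.
split=> [e [_ e_sym] hpm hF | m /andP [hm1 hm2]].
  by apply: (fmin_bounds_of_Fmax e_sym) => //; rewrite card_ord.
have m_lt_n : m < n by lia.
have n_le : n <= 2 * m + 1 by move: hm1; rewrite -divn2; lia.
exists (hub_graph n m); split.
- exact: hub_simple.
- by apply/existsP; exists (buddies n); apply: buddies_pm.
- exact: hub_Fmax.
- exact: hub_fmin.
Qed.
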